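(* Let $\alpha=(\alpha_\pi)_{\pi\in\mathcal P}$ be monic, singleton inductive weights. Let $A=\bigsqcup_{\mathsf Q\in\mathcal F}A^{\mathsf Q}$ be a multi-faced algebra in which each face $A^{\mathsf Q}$ is unital with unit $1^{\mathsf Q}$, and let $\varphi:A\to\mathbb C$ be linear with $\varphi(1^{\mathsf Q})=1$ for all $\mathsf Q$ and $\varphi$ vanishing on the two-sided ideal generated by $\{1^{\mathsf q}-1^{\mathsf Q}:\mathsf q,\mathsf Q\in\mathcal F\}$. Then $\log_\alpha\hat\varphi(a_1\otimes\cdots\otimes a_n)=0$ whenever $n>1$, $a_\ell\in A^{\mathbf f(\ell)}$ for some $\mathbf f\in\mathcal F^n$, and $a_s=1^{\mathbf f(s)}$ for some $s\in[n]$.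
   Context: Fix a finite set $\mathcal F$ of faces. Algebras are complex associative, not necessarily unital. A multi-faced algebra $A=\bigsqcup_{\mathsf Q}A^{\mathsf Q}$ is an algebra with subalgebras $A^{\mathsf Q}$ such that the canonical homomorphism from their free product to $A$ is an isomorphism. For $\mathbf f\in\mathcal F^n$, $\mathcal P(\mathbf f)$ is the set of set partitions of $[n]$ whose elements $\ell$ carry face $\mathbf f(\ell)$, $\mathcal P=\bigcup_{\mathbf f}\mathcal P(\mathbf f)$; partitions of a subset of $[n]$ (with restricted faces) are identified with elements of $\mathcal P$ via the order-preserving bijection. Weights $\alpha=(\alpha_\pi)_{\pi\in\mathcal P}\subset\mathbb C$ are monic if $\alpha_\pi=1$ for every one-block partition, and singleton inductive if $\alpha_\pi=\alpha_{\pi\setminus\{s\}}$ whenever $\{s\}$ is a singleton block of $\pi$ (where $\pi\setminus\{s\}$ is the partition of $[n]\setminus\{s\}$ obtained by removing that block). Let $V=\bigoplus_{\mathsf Q}A^{\mathsf Q}$ (a vector space graded by faces) and $T_0(V)=\bigoplus_{m\ge1}V^{\otimes m}$ the non-unital tensor algebra; $\mu:T_0(V)\to A$ is the canonical homomorphism and $\hat\varphi=\varphi\circ\mu$. For a linear $\psi$ on $T_0(V)$ define $\exp_\alpha(\psi)(x_1\otimes\cdots\otimes x_m)=\sum_{\pi\in\mathcal P(\mathbf g)}\alpha_\pi\prod_{\beta\in\pi}\psi(x_\beta)$ for $x_i\in V^{\mathbf g(i)}$, where $x_\beta$ is the tensor product of the $x_i$, $i\in\beta$, in increasing order; $\exp_\alpha$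 is a bijection on linear functionals on $T_0(V)$ and $\log_\alpha$ denotes its inverse. *)

From HB Require Import structures.
From mathcomp Require Import all_boot all_order all_algebra.
From mathcomp Require Import reals complex.

Set Implicit Arguments.
Unset Strict Implicit.
Unset Printing Implicit Defensive.

Import GRing.Theory.
Local Open Scope ring_scope.

Record nuAlg (K : pzRingType) := NuAlg {
  nua_car :> lmodType K;
  nua_mul : nua_car -> nua_car -> nua_car;
  nua_mulA : forall x y z, nua_mul x (nua_mul y z) = nua_mul (nua_mul x y) z;
  nua_mulDl : forall x y z, nua_mul (x + y) z = nua_mul x z + nua_mul y z;
  nua_mulDr : forall x y z, nua_mul x (y + z) = nua_mul x y + nua_mul x z;
  nua_mulZl : forall (a : K) x y, nua_mul (a *: x) y = a *: nua_mul x y;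
  nua_mulZr : forall (a : K) x y, nua_mul x (a *: y) = a *: nua_mul x y
}.

Section NuAlgDefs.
Variable K : pzRingType.

Definition is_subspace (A : nuAlg K) (S : A -> Prop) : Prop :=
  S 0 /\ (forall x y, S x -> S y -> S (x + y)) /\
  (forall (a : K) x, S x -> S (a *: x)).

Definition is_subalg (A : nuAlg K) (S : A -> Prop) : Prop :=
  is_subspace S /\ (forall x y, S x -> S y -> S (nua_mul x y)).

Definition is_ideal (A : nuAlg K) (S : A -> Prop) : Prop :=
  is_subspace S /\ (forall x y, S x -> S (nua_mul y x) /\ S (nua_mul x y)).

Definition ideal_gen (A : nuAlg K) (G : A -> Prop) (x : A) : Prop :=
  forall I : A -> Prop, is_ideal I -> (forall g, G g -> I g) -> I x.

Definition alg_hom_on (A B : nuAlg K) (S : A -> Prop) (h : A -> B) : Prop :=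
  (forall x y, S x -> S y -> h (x + y) = h x + h y) /\
  (forall (a : K) x, S x -> h (a *: x) = a *: h x) /\
  (forall x y, S x -> S y -> h (nua_mul x y) = nua_mul (h x) (h y)).

(* Multi-faced algebra: the A^Q are subalgebras and the canonical
   homomorphism from their free product to A is an isomorphism, i.e.
   (A, inclusions A^Q -> A) satisfies the universal property of the
   free product (= coproduct in the category of algebras). *)
Definition multifaced (F : finType) (A : nuAlg K) (Af : F -> A -> Prop) : Prop :=
  (forall Q, is_subalg (Af Q)) /\
  forall (B : nuAlg K) (h : F -> A -> B),
    (forall Q, alg_hom_on (Af Q) (h Q)) ->
    (exists g : A -> B, alg_hom_on (fun _ => True) g /\
        forall Q x, Af Q x -> g x = h Q x) /\
    (forall g1 g2 : A -> B,
        alg_hom_on (fun _ => True) g1 -> alg_hom_on (fun _ => True) g2 ->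
        (forall Q x, Af Q x -> g1 x = h Q x) ->
        (forall Q x, Af Q x -> g2 x = h Q x) ->
        forall x, g1 x = g2 x).
End NuAlgDefs.

(* Weights alpha : for pi in P(f), f : 'I_n -> F, the partition pi is a
   set partition of 'I_n (finset's  partition pi [set: 'I_n]).          *)
Definition weights (F : finType) (C : Type) :=
  forall n : nat, ('I_n -> F) -> {set {set 'I_n}} -> C.

Definition monic_weights (F : finType) (C : pzRingType) (al : weights F C) :=
  forall n (f : 'I_n -> F), (0 < n)%N -> al n f [set [set: 'I_n]] = 1.

(* pi \ {s}, transported to 'I_m along the order-preserving bijection
   lift s : 'I_m -> [m+1] \ {s} *)
Definition remove_singleton m (s : 'I_m.+1) (pi : {set {set 'I_m.+1}})
  : {set {set 'I_m}} :=
  [set lift s @^-1: B | B : {set 'I_m.+1} in pi :\ [set s]].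

Definition singleton_inductive (F : finType) (C : Type) (al : weights F C) :=
  forall m (f : 'I_m.+1 -> F) (pi : {set {set 'I_m.+1}}) (s : 'I_m.+1),
    partition pi [set: 'I_m.+1] -> [set s] \in pi ->
    al m.+1 f pi = al m (f \o lift s) (remove_singleton s pi).

(* Elementary tensors x_1 (x) ... (x) x_m of homogeneous elements of
   V = (+)_Q A^Q are represented as sequences of pairs (face, element). *)
Section Tensor.
Variables (F : finType) (C : pzRingType) (A : nuAlg C).

Definition exp_alpha (al : weights F C) (psi : seq (F * A) -> C)
    (s : seq (F * A)) : C :=
  \sum_(pi : {set {set 'I_(size s)}} | partition pi [set: 'I_(size s)])
     al (size s) (fun i => (tnth (in_tuple s) i).1) pi *
     \prod_(B in pi) psi [seq tnth (in_tuple s) i | i <- enum B].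

Definition phi_hat (phi : A -> C) (s : seq (F * A)) : C :=
  match s with
  | [::] => 0
  | x :: r => phi (foldl (@nua_mul C A) x.2 (map snd r))
  end.

Definition homogeneous (Af : F -> A -> Prop) (s : seq (F * A)) : Prop :=
  forall x, x \in s -> Af x.1 x.2.
End Tensor.

(* Induction on the length of the tensor a = a_1 (x) ... (x) a_n, with a_k = 1^Q.
   Split the partitions in exp_alpha(psi)(a) according to whether {k} is a block.
   Those that have it contribute, by singleton inductivity,
   psi(1^Q) exp_alpha(psi)(a without a_k) = hat phi(a without a_k), as
   psi(1^Q) = phi(1^Q) = 1.  Among the others, every partition but the one-block
   partition has a block containing k of size between 2 and n-1, on which psi
   vanishes by induction; the one-block partition contributes psi(a).  Finally
   hat phi(a) = hat phi(a without a_k): modulo the ideal killed by phi, 1^Q may be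
   replaced by the unit of a neighbouring face, which it absorbs.  Hence
   psi(a) = 0. *)

From HB Require Import structures.
From mathcomp Require Import all_boot all_order all_algebra.
From mathcomp Require Import reals complex.
From Stdlib Require Import FunctionalExtensionality.
Set Implicit Arguments.
Unset Strict Implicit.
Unset Printing Implicit Defensive.

Import GRing.Theory.
Local Open Scope ring_scope.

Section Partitions.
Variable T : finType.
Implicit Types (P : {set {set T}}) (x : T).

Lemma partition_setT_block P :
  partition P [set: T] -> [set: T] \in P -> P = [set [set: T]].
Proof.
move=> partP PT; apply/setP => B; rewrite inE; apply/idP/eqP => [PB|-> //].
have /set0Pn [x xB] := partition_neq0 partP PB.
by rewrite -(def_pblock (partition_trivIset partP) PB xB)
           (def_pblock (partition_trivIset partP) PT (in_setT x)).
Qed.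

Lemma partition_set1T x : partition [set [set: T]] [set: T].
Proof.
rewrite /partition /cover big_set1 eqxx trivIset1 inE /= eq_sym.
by apply/set0Pn; exists x.
Qed.

Lemma partition_card1 P : #|T| = 1%N ->
  partition P [set: T] = (P == [set [set: T]]).
Proof.
move=> cardT; have /cards1P [x defT] : #|[set: T]| == 1%N by rewrite cardsT cardT.
apply/idP/eqP => [partP|->]; last exact: partition_set1T.
apply: partition_setT_block => //.
have xP : x \in cover P by rewrite (cover_partition partP).
suff <- : pblock P x = [set: T] by exact: pblock_mem.
by apply/eqP; rewrite eqEsubset subsetT /= defT sub1set mem_pblock.
Qed.
End Partitions.

Section SingletonBlock.
Variables (m : nat) (k : 'I_m.+1).
Implicit Types (pi : {set {set 'I_m}}) (B : {set 'I_m}).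

Definition add_singleton pi : {set {set 'I_m.+1}} :=
  [set k] |: [set lift k @: (B : {set 'I_m}) | B in pi].

Lemma notin_imset_lift B : k \notin lift k @: B.
Proof. by apply/imsetP => -[j _ /eqP]; rewrite eq_sym lift_eqF. Qed.

Lemma set1_notin_lift_blocks pi : [set k] \notin [set lift k @: (B : {set 'I_m}) | B in pi].
Proof. by apply/imsetP => -[B _ kB]; have := notin_imset_lift B; rewrite -kB set11. Qed.

Lemma imset_liftT : lift k @: [set: 'I_m] = [set~ k].
Proof.
apply/setP => i; rewrite !inE; case: (unliftP k i) => [j ->|->].
  by rewrite lift_eqF mem_imset ?in_setT //; exact: lift_inj.
by rewrite eqxx (negbTE (notin_imset_lift _)).
Qed.

Lemma partition_add_singleton pi :
  partition (add_singleton pi) [set: 'I_m.+1] = partition pi [set: 'I_m].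
Proof.
rewrite -(imset_partition _ _ (@lift_inj _ k)) imset_liftT.
apply/idP/idP => [partP|partP].
  by rewrite -(setU1K (set1_notin_lift_blocks pi)) -setTD; exact: partitionD1 (setU11 _ _).
rewrite -(setUCr [set k]) /add_singleton; apply: partitionU1 => //.
  by apply/set0Pn; exists k; rewrite set11.
by rewrite disjoints1 !inE eqxx.
Qed.

Lemma preimset_lift_imset B : lift k @^-1: (lift k @: B) = B.
Proof. by apply/setP => j; rewrite inE mem_imset //; exact: lift_inj. Qed.

Lemma imset_lift_preimset (D : {set 'I_m.+1}) : k \notin D -> lift k @: (lift k @^-1: D) = D.
Proof.
move=> kD; apply/setP => i; case: (unliftP k i) => [j ->|->].
  by rewrite mem_imset ?inE //; exact: lift_inj.
by rewrite (negbTE (notin_imset_lift _)) (negbTE kD).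
Qed.

Lemma remove_add_singleton pi : remove_singleton k (add_singleton pi) = pi.
Proof.
rewrite /remove_singleton /add_singleton setU1K ?set1_notin_lift_blocks //.
rewrite -imset_comp (eq_imset _ preimset_lift_imset); exact: imset_id.
Qed.

Lemma add_remove_singleton (pi : {set {set 'I_m.+1}}) :
  partition pi [set: 'I_m.+1] -> [set k] \in pi ->
  add_singleton (remove_singleton k pi) = pi.
Proof.
move=> partP kpi; have trivP := partition_trivIset partP.
have kD D : D \in pi :\ [set k] -> k \notin D.
  case/setD1P => DNk piD; apply: contra DNk => kD.
  by rewrite -(def_pblock trivP piD kD) (def_pblock trivP kpi (set11 k)).
rewrite /add_singleton /remove_singleton -imset_comp.
rewrite (eq_in_imset (fun D piD => imset_lift_preimset (kD D piD))) imset_id.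
by rewrite setD1K.
Qed.

Lemma sorted_enum_ord n (A : {set 'I_n}) : sorted (fun i j : 'I_n => i < j)%N (enum A).
Proof.
apply: sorted_filter; first exact: ltn_trans.
by rewrite -enumT -(@sorted_map _ _ val ltn) val_enum_ord iota_ltn_sorted.
Qed.

Lemma enum_imset_lift B : enum (lift k @: B) = map (lift k) (enum B).
Proof.
apply: (@irr_sorted_eq _ (fun i j : 'I_m.+1 => i < j)%N).
- exact: ltn_trans.
- by move=> i; rewrite ltnn.
- exact: sorted_enum_ord.
- have lift_mono : {homo lift k : i j / (i < j)%N}.
    by move=> i j; rewrite /= !ltnNge !leq_bump2.
  exact: homo_sorted lift_mono _ (sorted_enum_ord B).
- move=> i; rewrite mem_enum; apply/imsetP/mapP => -[j jB ->]; exists j => //;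
  by rewrite ?mem_enum in jB *.
Qed.
End SingletonBlock.

Lemma map_nth_enum_ord (T : Type) (x : T) (s : seq T) n : size s = n ->
  [seq nth x s i | i : 'I_n <- enum 'I_n] = s.
Proof. by move=> <-; rewrite (map_comp (nth x s) val) val_enum_ord; exact: mkseq_nth. Qed.

Lemma nth_cat_bump (T : Type) (x : T) l1 l2 j :
  nth x (l1 ++ x :: l2) (bump (size l1) j) = nth x (l1 ++ l2) j.
Proof.
rewrite /bump !nth_cat; case: (leqP (size l1) j) => [j_ge|j_lt].
  by rewrite /= add1n ltnNge (leqW j_ge) /= subSn.
by rewrite /= add0n j_lt.
Qed.

Section ExpAlphaFun.
Variables (F : finType) (C : comPzRingType) (A : nuAlg C) (al : weights F C)
  (psi : seq (F * A) -> C).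

Definition block_term n (g : 'I_n -> F * A) (pi : {set {set 'I_n}}) : C :=
  al (fun i => (g i).1) pi * \prod_(B in pi) psi [seq g i | i <- enum B].

Definition exp_alpha_fun n (g : 'I_n -> F * A) : C :=
  \sum_(pi | partition pi [set: 'I_n]) block_term g pi.

Lemma exp_alpha_fun_cast n1 n2 (e : n1 = n2) (g1 : 'I_n1 -> F * A) g2 :
  (forall i, g1 i = g2 (cast_ord e i)) -> exp_alpha_fun g1 = exp_alpha_fun g2.
Proof.
case: n2 / e g2 => g2 g12.
by congr exp_alpha_fun; apply: functional_extensionality => i; rewrite g12 cast_ord_id.
Qed.

Lemma exp_alpha_tnth s : exp_alpha al psi s = exp_alpha_fun (tnth (in_tuple s)).
Proof. by []. Qed.

Lemma exp_alpha_funE n (g : 'I_n -> F * A) :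
  exp_alpha_fun g = exp_alpha al psi [seq g i | i <- enum 'I_n].
Proof.
have e : n = size [seq g i | i <- enum 'I_n] by rewrite size_map size_enum_ord.
rewrite exp_alpha_tnth; apply: (exp_alpha_fun_cast (e := e)) => i.
by rewrite (tnth_nth (g i)) /= (nth_map i) ?size_enum_ord // nth_ord_enum.
Qed.

Hypothesis al_monic : monic_weights al.

Lemma exp_alpha_fun_ord1 (g : 'I_1 -> F * A) : exp_alpha_fun g = psi [:: g ord0].
Proof.
rewrite /exp_alpha_fun (big_pred1 [set [set: 'I_1]]); last first.
  by move=> pi; rewrite partition_card1 ?card_ord.
by rewrite /block_term al_monic // big_set1 enum_setT -enumT enum_ordSl enum_ord0 mul1r.
Qed.

Section SplitAtSingleton.
Variables (m : nat) (k : 'I_m.+1) (g : 'I_m.+1 -> F * A).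

Lemma sum_singleton_block : singleton_inductive al ->
  \sum_(pi | partition pi [set: 'I_m.+1] && ([set k] \in pi)) block_term g pi
  = psi [:: g k] * exp_alpha_fun (fun j => g (lift k j)).
Proof.
move=> al_sing; rewrite (reindex_onto (add_singleton k) (remove_singleton k)) /=; last first.
  by move=> pi /andP[partP kpi]; exact: add_remove_singleton.
rewrite big_distrr; apply: eq_big => pi.
  rewrite partition_add_singleton remove_add_singleton !inE eqxx andbT.
  by apply/andP/idP => [[] | ->].
case/andP=> /andP[partP kpi] _.
rewrite /block_term (al_sing _ _ _ k partP kpi) remove_add_singleton.
rewrite big_setU1 ?set1_notin_lift_blocks //= enum_set1 mulrCA; congr (_ * (_ * _)).
rewrite big_imset /=; last by move=> B D _ _; exact/imset_inj/lift_inj.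
by apply: eq_bigr => B _; rewrite enum_imset_lift -map_comp.
Qed.

Lemma sum_no_singleton_block : (0 < m)%N ->
  (forall B : {set 'I_m.+1}, k \in B -> (1 < #|B| < m.+1)%N ->
     psi [seq g i | i <- enum B] = 0) ->
  \sum_(pi | partition pi [set: 'I_m.+1] && ([set k] \notin pi)) block_term g pi
  = psi [seq g i | i <- enum 'I_m.+1].
Proof.
move=> m_gt0 psi_vanish.
have k1_neqT : [set k] != [set: 'I_m.+1].
  apply/eqP => kT; have := congr1 (fun D : {set 'I_m.+1} => #|D|) kT.
  by rewrite /= cards1 cardsT card_ord => -[m0]; rewrite -m0 in m_gt0.
rewrite (bigD1 [set [set: 'I_m.+1]]) /=; last by rewrite partition_set1T // inE.
rewrite big1 ?addr0; first by rewrite /block_term al_monic // big_set1 enum_setT -enumT mul1r.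
move=> pi /andP[/andP[partP kNpi] piNT].
have kcov : k \in cover pi by rewrite (cover_partition partP) inE.
rewrite /block_term (bigD1 (pblock pi k)) ?pblock_mem //=.
rewrite psi_vanish ?mem_pblock // ?mul0r ?mulr0 //; apply/andP; split.
  rewrite -(cards1 k) proper_card // properEneq sub1set mem_pblock kcov andbT.
  by apply: contraNneq kNpi => ->; exact: pblock_mem.
suff /proper_card : pblock pi k \proper [set: 'I_m.+1] by rewrite cardsT card_ord.
rewrite properT; apply: contraNneq piNT => pkT.
by apply/eqP/partition_setT_block; rewrite // -pkT pblock_mem.
Qed.
End SplitAtSingleton.

Lemma exp_alpha_fun_split m (k : 'I_m.+1) (g : 'I_m.+1 -> F * A) :
  singleton_inductive al -> (0 < m)%N ->
  (forall B : {set 'I_m.+1}, k \in B -> (1 < #|B| < m.+1)%N ->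
     psi [seq g i | i <- enum B] = 0) ->
  exp_alpha_fun g = psi [:: g k] * exp_alpha_fun (fun j => g (lift k j))
                    + psi [seq g i | i <- enum 'I_m.+1].
Proof.
move=> al_sing m_gt0 psi_vanish.
rewrite {1}/exp_alpha_fun (bigID (fun pi : {set {set 'I_m.+1}} => [set k] \in pi)) /=.
by rewrite sum_singleton_block // sum_no_singleton_block.
Qed.

Lemma exp_alpha_split l1 x l2 : singleton_inductive al -> (0 < size (l1 ++ l2))%N ->
  (forall t, (1 < size t <= size (l1 ++ l2))%N -> {subset t <= l1 ++ x :: l2} ->
     x \in t -> psi t = 0) ->
  exp_alpha al psi (l1 ++ x :: l2)
  = psi [:: x] * exp_alpha al psi (l1 ++ l2) + psi (l1 ++ x :: l2).
Proof.
set s := l1 ++ x :: l2; set m := size (l1 ++ l2) => al_sing m_gt0 psi_vanish.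
have size_s : size s = m.+1 by rewrite /s /m !size_cat addnS.
have k_lt : (size l1 < m.+1)%N by rewrite /m size_cat ltnS leq_addr.
pose k := Ordinal k_lt.
have sk : nth x s k = x by rewrite nth_cat ltnn subnn.
rewrite -{1}(map_nth_enum_ord x size_s) -exp_alpha_funE.
rewrite (exp_alpha_fun_split (k := k)) //; last first.
  move=> B kB /andP[B_gt1 B_lt]; apply: psi_vanish.
  - by rewrite size_map -cardE B_gt1 -ltnS.
  - by move=> y /mapP[i _ ->]; apply: mem_nth; rewrite size_s.
  - by apply/mapP; exists k; rewrite ?mem_enum ?sk.
rewrite sk exp_alpha_funE map_nth_enum_ord //.
congr (_ * exp_alpha _ _ _ + _).
rewrite -[RHS](map_nth_enum_ord x (erefl m)); apply: eq_map => j.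
exact: nth_cat_bump.
Qed.
End ExpAlphaFun.

Section IdealGen.
Variables (K : pzRingType) (A : nuAlg K).
Local Notation mul := (@nua_mul K A).

Lemma nua_mulBl x y z : mul (x - y) z = mul x z - mul y z.
Proof. by rewrite nua_mulDl -scaleN1r nua_mulZl scaleN1r. Qed.

Lemma nua_mulBr x y z : mul x (y - z) = mul x y - mul x z.
Proof. by rewrite nua_mulDr -scaleN1r nua_mulZr scaleN1r. Qed.

Lemma foldl_mulBl u v l : foldl mul (u - v) l = foldl mul u l - foldl mul v l.
Proof. by elim: l u v => [|a l IHl] u v //=; rewrite nua_mulBl IHl. Qed.

Variable G : A -> Prop.

Lemma ideal_gen_gen g : G g -> ideal_gen G g.
Proof. by move=> Gg I _ GI; exact: GI. Qed.

Lemma ideal_gen_mull x y : ideal_gen G x -> ideal_gen G (mul y x).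
Proof. by move=> Gx I idI GI; exact: (idI.2 x y (Gx I idI GI)).1. Qed.

Lemma ideal_gen_mulr x y : ideal_gen G x -> ideal_gen G (mul x y).
Proof. by move=> Gx I idI GI; exact: (idI.2 x y (Gx I idI GI)).2. Qed.

Lemma ideal_gen_foldl u l : ideal_gen G u -> ideal_gen G (foldl mul u l).
Proof. by elim: l u => [|a l IHl] u //= Gu; apply: IHl; exact: ideal_gen_mulr. Qed.
End IdealGen.

Section DropUnit.
Variables (F : finType) (K : pzRingType) (A : nuAlg K) (Af : F -> A -> Prop)
  (one : F -> A) (phi : A -> K).
Local Notation mul := (@nua_mul K A).
Local Notation unit_ideal := (ideal_gen (fun g : A => exists q Q, g = one q - one Q)).

Hypothesis one_unit : forall Q a, Af Q a -> mul (one Q) a = a /\ mul a (one Q) = a.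
Hypothesis phi_lin : forall (c : K) x y, phi (c *: x + y) = c * phi x + phi y.
Hypothesis phi_unit_ideal : forall x, unit_ideal x -> phi x = 0.

Lemma phi_foldl_mod u v l : unit_ideal (u - v) ->
  phi (foldl mul u l) = phi (foldl mul v l).
Proof.
move=> uv; apply/eqP; rewrite -subr_eq0 -mulN1r addrC -phi_lin scaleN1r addrC.
by rewrite -foldl_mulBl phi_unit_ideal //; exact: ideal_gen_foldl.
Qed.

Lemma unit_diff_ideal q Q : unit_ideal (one q - one Q).
Proof. by apply: ideal_gen_gen; exists q, Q. Qed.

Lemma foldl_mul_last_unit (p : F * A) a l :
  mul a (one p.1) = a -> homogeneous Af l ->
  mul (foldl mul a (map snd l)) (one (last p l).1) = foldl mul a (map snd l).
Proof.
elim: l p a => [|p' l IHl] p a //= _ homl; apply: IHl.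
  by have /one_unit[_ p'u] := homl p' (mem_head _ _); rewrite -nua_mulA p'u.
by move=> y yl; apply: homl; rewrite inE yl orbT.
Qed.

Lemma phi_hat_drop_unit l1 p l2 : p.2 = one p.1 -> l1 ++ l2 != [::] ->
  homogeneous Af (l1 ++ p :: l2) ->
  phi_hat phi (l1 ++ p :: l2) = phi_hat phi (l1 ++ l2).
Proof.
move=> p_one; case: l1 => [|p0 l1] /= l12 homs.
  case: l2 l12 homs => [|[q b] l2] //= _ homs.
  have /one_unit[qb _] : Af q b by apply: (homs (q, b)); rewrite !inE eqxx orbT.
  rewrite -[in RHS]qb; apply: phi_foldl_mod; rewrite -nua_mulBl p_one.
  exact: ideal_gen_mulr (unit_diff_ideal _ _).
rewrite !map_cat !foldl_cat /=.
set X := foldl mul p0.2 (map snd l1).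
have Xu : mul X (one (last p0 l1).1) = X.
  apply: foldl_mul_last_unit; first exact: (one_unit (homs p0 (mem_head _ _))).2.
  by move=> y yl; apply: homs; rewrite inE mem_cat yl orbT.
rewrite -[in RHS]Xu; apply: phi_foldl_mod; rewrite -nua_mulBr p_one.
exact: ideal_gen_mull (unit_diff_ideal _ _).
Qed.
End DropUnit.

Section UnitTensors.
Variables (F : finType) (C : comPzRingType) (A : nuAlg C) (Af : F -> A -> Prop)
  (one : F -> A) (phi : A -> C) (al : weights F C) (psi : seq (F * A) -> C).

Hypothesis al_monic : monic_weights al.
Hypothesis al_sing : singleton_inductive al.
Hypothesis one_face : forall Q, Af Q (one Q).
Hypothesis one_unit : forall Q a, Af Q a -> nua_mul (one Q) a = a /\ nua_mul a (one Q) = a.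
Hypothesis phi_lin : forall (c : C) x y, phi (c *: x + y) = c * phi x + phi y.
Hypothesis phi_one : forall Q, phi (one Q) = 1.
Hypothesis phi_unit_ideal :
  forall x, ideal_gen (fun g => exists q Q, g = one q - one Q) x -> phi x = 0.
Hypothesis psi_log : forall s, (0 < size s)%N -> homogeneous Af s ->
  exp_alpha al psi s = phi_hat phi s.

Lemma log_alpha_unit1 x : x.2 = one x.1 -> psi [:: x] = 1.
Proof.
move=> x_one; rewrite -(phi_one x.1) -x_one -[RHS]/(phi_hat phi [:: x]) -psi_log //.
  by rewrite exp_alpha_tnth exp_alpha_fun_ord1.
by move=> y; rewrite inE => /eqP ->; rewrite x_one.
Qed.

Lemma log_alpha_unit_eq0 s : (1 < size s)%N -> homogeneous Af s ->
  (exists2 x, x \in s & x.2 = one x.1) -> psi s = 0.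
Proof.
have [N] := ubnP (size s); elim: N s => // N IHN s0.
move=> s_lt s_gt1 homs [x xs x_one].
case/splitPr: xs s_lt s_gt1 homs => l1 l2; set s := l1 ++ x :: l2 => s_lt s_gt1 homs.
have size_s : size s = (size (l1 ++ l2)).+1 by rewrite /s !size_cat addnS.
have l12_gt0 : (0 < size (l1 ++ l2))%N by rewrite -ltnS -size_s.
have homl12 : homogeneous Af (l1 ++ l2).
  by move=> y; rewrite mem_cat => y12; apply: homs; rewrite mem_cat inE orbCA y12 orbT.
have vanish t : (1 < size t <= size (l1 ++ l2))%N -> {subset t <= s} ->
    x \in t -> psi t = 0.
  case/andP=> t_gt1 t_le sub_t xt; apply: IHN => //; last by exists x.
    by rewrite -ltnS (leq_trans _ s_lt) // size_s ltnS.
  by move=> y /sub_t; exact: homs.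
have := exp_alpha_split al_monic al_sing l12_gt0 vanish.
rewrite !psi_log ?size_s // (log_alpha_unit1 x_one) mul1r.
rewrite (phi_hat_drop_unit one_unit phi_lin phi_unit_ideal x_one) -?size_eq0 -?lt0n //.
by rewrite -[X in X = _]addr0 => /addrI ->.
Qed.
End UnitTensors.

Theorem lemma9p6 (R : realType) (F : finType) (al : weights F R[i])
  (A : nuAlg R[i]) (Af : F -> A -> Prop) (one : F -> A) (phi : A -> R[i]) :
  monic_weights al -> singleton_inductive al ->
  multifaced Af ->
  (forall Q, Af Q (one Q)) ->
  (forall Q a, Af Q a -> nua_mul (one Q) a = a /\ nua_mul a (one Q) = a) ->
  (forall (c : R[i]) x y, phi (c *: x + y) = c * phi x + phi y) ->
  (forall Q, phi (one Q) = 1) ->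
  (forall x, ideal_gen (fun g => exists q Q, g = one q - one Q) x -> phi x = 0) ->
  (* psi = log_alpha(hat phi): the (unique) functional with exp_alpha psi = hat phi *)
  forall psi : seq (F * A) -> R[i],
    (forall s, (0 < size s)%N -> homogeneous Af s ->
       exp_alpha al psi s = phi_hat phi s) ->
  forall s : seq (F * A), (1 < size s)%N -> homogeneous Af s ->
    (exists2 x, x \in s & x.2 = one x.1) ->
    psi s = 0.
Proof.
move=> al_monic al_sing _ one_face one_unit phi_lin phi_one phi_unit_ideal psi psi_log s.
exact: (log_alpha_unit_eq0 al_monic al_sing one_face one_unit phi_lin phi_one
          phi_unit_ideal psi_log).
Qed.
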